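(* Let $L>0$, $d\in\mathbb{N}$, let $I$ be a finite index set and $\mathcal{T}=\{(x_i,g_i,f_i)\}_{i\in I}$ with $x_i,g_i\in\mathbb{R}^d$, $f_i\in\mathbb{R}$. Let $C\subset\mathbb{R}^d$ be a closed convex set with $0\in C$. Define $w_{\mathcal{T}}:\mathbb{R}^d\times\mathbb{R}^d\times\mathbb{R}^I\to\mathbb{R}$ by \[ w_{\mathcal{T}}(y,\nu,\alpha)=\frac{L}{2}\Big\|y+\nu-\sum_{i\in I}\alpha_i\big(x_i-\tfrac1L g_i\big)\Big\|^2+\sum_{i\in I}\alpha_i\Big(f_i-\tfrac{1}{2L}\|g_i\|^2\Big), \] and $W^C_{\mathcal{T}}(y)=\min_{\nu\in C,\ \alpha\in\Delta_I} w_{\mathcal{T}}(y,\nu,\alpha)$, where $\Delta_I=\{\alpha\in\mathbb{R}^I:\sum_{i\in I}\alpha_i=1,\ \alpha_i\geq 0\ \forall i\}$. Then $W^C_{\mathcal{T}}$ is convex and belongs to $C^{1,1}_L$. Furthermore, for any $i\in I$ such that $P_C(-\frac1L g_i)=0$ and \[ \frac{1}{2L}\|g_i-g_j\|^2\leq f_j-f_i-\langle g_i,x_j-x_i\rangle\quad\text{for all } j\in I, \] we have $W^C_{\mathcal{T}}(x_i)=f_i$ and $\nabla W^C_{\mathcal{T}}(x_i)=g_i$.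
   Context: $P_C$ denotes the Euclidean projection onto $C$. $C^{1,1}_L$ denotes the class of differentiable functions on $\mathbb{R}^d$ whose gradient is Lipschitz continuous with constant $L$. *)

From HB Require Import structures.
From mathcomp Require Import all_boot all_order all_algebra.
From mathcomp Require Import all_classical all_reals all_analysis.
Set Implicit Arguments. Unset Strict Implicit. Unset Printing Implicit Defensive.
Import Order.TTheory GRing.Theory Num.Theory.
Import numFieldNormedType.Exports.
Local Open Scope classical_set_scope.
Local Open Scope ring_scope.

Definition dotv {R : realType} {d : nat} (u v : 'rV[R]_d) : R :=
  \sum_(k < d) u ord0 k * v ord0 k.
Definition enorm {R : realType} {d : nat} (u : 'rV[R]_d) : R :=
  Num.sqrt (dotv u u).

Definition convex_setE {R : realType} {d : nat} (C : set 'rV[R]_d) : Prop :=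
  forall x y t, C x -> C y -> 0 <= t <= 1 -> C (t *: x + (1 - t) *: y).
Definition convex_fun {R : realType} {d : nat} (F : 'rV[R]_d -> R) : Prop :=
  forall x y t, 0 <= t <= 1 ->
    F (t *: x + (1 - t) *: y) <= t * F x + (1 - t) * F y.

Definition has_gradient {R : realType} {d : nat} (F : 'rV[R]_d -> R)
  (x g : 'rV[R]_d) : Prop :=
  differentiable F x /\ forall h, 'd F x h = dotv g h.

Definition C11 {R : realType} {d : nat} (L : R) (F : 'rV[R]_d -> R) : Prop :=
  exists G : 'rV[R]_d -> 'rV[R]_d,
    (forall x, has_gradient F x (G x)) /\
    (forall x y, enorm (G x - G y) <= L * enorm (x - y)).

Definition is_proj {R : realType} {d : nat} (C : set 'rV[R]_d) (z p : 'rV[R]_d)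
  : Prop := C p /\ forall q, C q -> enorm (z - p) <= enorm (z - q).

Definition simplex {R : realType} {I : finType} : set (I -> R) :=
  [set a | \sum_(i : I) a i = 1 /\ forall i, 0 <= a i].

Definition w_T {R : realType} {d : nat} {I : finType} (L : R)
  (x g : I -> 'rV[R]_d) (f : I -> R) (y nu : 'rV[R]_d) (a : I -> R) : R :=
  L / 2 * enorm (y + nu - \sum_(i : I) a i *: (x i - L^-1 *: g i)) ^+ 2
  + \sum_(i : I) a i * (f i - (2 * L)^-1 * enorm (g i) ^+ 2).

Definition W_T {R : realType} {d : nat} {I : finType} (L : R)
  (x g : I -> 'rV[R]_d) (f : I -> R) (C : set 'rV[R]_d) (y : 'rV[R]_d) : R :=
  inf [set w_T L x g f y nu a | nu in C & a in simplex].

From HB Require Import structures.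
From mathcomp Require Import all_boot all_order all_algebra.
From mathcomp Require Import all_classical all_reals all_analysis.
From mathcomp Require Import ring lra.
Set Implicit Arguments. Unset Strict Implicit. Unset Printing Implicit Defensive.
Import Order.TTheory GRing.Theory Num.Theory.
Import numFieldNormedType.Exports.
Local Open Scope classical_set_scope.
Local Open Scope ring_scope.

(* For fixed [nu] and [alpha], [w_T] is [L/2 |y|^2] plus an affine function of
   [y], and it is jointly convex in [(y, nu, alpha)] over the convex set
   [C x simplex].  Hence [W_T] is convex and [W_T - L/2 |.|^2], an infimum of
   affine functions, is concave.  For such a function the difference quotients
   [(F (x + t h) - F x) / t] increase with [t] but by at most [L/2 t |h|^2], so
   their infimum is linear in [h]; this yields a gradient [G] with
   [0 <= F (x + h) - F x - <G x, h> <= L/2 |h|^2], and comparing these bounds at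
   two points gives co-coercivity of [G], hence its [L]-Lipschitz continuity.
   At [x_i], taking [nu = 0] and [alpha] the vertex [i] bounds [W_T (x_i + h)]
   by [f_i + <g_i, h> + L/2 |h|^2]; Young's inequality, the interpolation
   conditions and [<g_i, nu> >= 0] on [C] (the projection condition) give
   [W_T x_i >= f_i], and a subgradient at a point where such a quadratic
   majorant touches must be [g_i]. *)

Section Dotv.
Context {R : realType} {d : nat}.
Implicit Types (u v w : 'rV[R]_d) (a : R).

Lemma dotvC u v : dotv u v = dotv v u.
Proof. by apply: eq_bigr => k _; rewrite mulrC. Qed.

Lemma dotvDl u v w : dotv (u + v) w = dotv u w + dotv v w.
Proof. by rewrite /dotv -big_split; apply: eq_bigr => k _; rewrite !mxE mulrDl. Qed.

Lemma dotvDr u v w : dotv u (v + w) = dotv u v + dotv u w.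
Proof. by rewrite dotvC dotvDl !(dotvC u). Qed.

Lemma dotvZl a u v : dotv (a *: u) v = a * dotv u v.
Proof. by rewrite /dotv mulr_sumr; apply: eq_bigr => k _; rewrite !mxE mulrA. Qed.

Lemma dotvZr a u v : dotv u (a *: v) = a * dotv u v.
Proof. by rewrite dotvC dotvZl dotvC. Qed.

Lemma dotvNl u v : dotv (- u) v = - dotv u v.
Proof. by rewrite -scaleN1r dotvZl mulN1r. Qed.

Lemma dotvNr u v : dotv u (- v) = - dotv u v.
Proof. by rewrite dotvC dotvNl dotvC. Qed.

Lemma dotvBl u v w : dotv (u - v) w = dotv u w - dotv v w.
Proof. by rewrite dotvDl dotvNl. Qed.

Lemma dotvBr u v w : dotv u (v - w) = dotv u v - dotv u w.
Proof. by rewrite dotvDr dotvNr. Qed.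

Lemma dotv0r u : dotv u 0 = 0.
Proof. by rewrite -(scale0r 0) dotvZr mul0r. Qed.

Lemma dotv_sumr (I : finType) (F : I -> 'rV[R]_d) u :
  dotv u (\sum_i F i) = \sum_i dotv u (F i).
Proof.
rewrite /dotv exchange_big /=; apply: eq_bigr => k _.
by rewrite summxE mulr_sumr.
Qed.

Lemma dotv_ge0 u : 0 <= dotv u u.
Proof. by apply: sumr_ge0 => k _; rewrite -expr2 sqr_ge0. Qed.

Lemma dotv_eq0 u : (dotv u u == 0) = (u == 0).
Proof.
apply/idP/eqP => [|->]; last by rewrite dotv0r.
rewrite psumr_eq0 => [/allP u0|k _]; last by rewrite -expr2 sqr_ge0.
apply/rowP => k; rewrite mxE; apply/eqP; rewrite -sqrf_eq0 expr2.
exact: (implyP (u0 k (mem_index_enum k))).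
Qed.

Lemma sqr_enorm u : enorm u ^+ 2 = dotv u u.
Proof. by rewrite sqr_sqrtr // dotv_ge0. Qed.

Lemma dotv_comb a u v :
  dotv (a *: u + (1 - a) *: v) (a *: u + (1 - a) *: v) =
  a * dotv u u + (1 - a) * dotv v v - a * (1 - a) * dotv (u - v) (u - v).
Proof.
by rewrite !(dotvDl, dotvDr, dotvZl, dotvZr, dotvNl, dotvNr) (dotvC v u); ring.
Qed.

Lemma dotv_young (L : R) u v : 0 < L ->
  dotv u v - (2 * L)^-1 * dotv u u <= L / 2 * dotv v v.
Proof.
move=> L0; rewrite -subr_ge0.
have -> : L / 2 * dotv v v - (dotv u v - (2 * L)^-1 * dotv u u) =
    L / 2 * dotv (v - L^-1 *: u) (v - L^-1 *: u).
  rewrite !(dotvDl, dotvDr, dotvZl, dotvZr, dotvNl, dotvNr) (dotvC v u).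
  by field; rewrite gt_eqF.
by rewrite mulr_ge0 ?dotv_ge0 // divr_ge0 ?ltW.
Qed.

Lemma enorm_le_cocoercive (L : R) u v : 0 <= L ->
  dotv u u <= L * dotv u v -> enorm u <= L * enorm v.
Proof.
move=> L0 uv.
have : 0 <= dotv (u - L *: v) (u - L *: v) by exact: dotv_ge0.
rewrite !(dotvBl, dotvBr, dotvZl, dotvZr) (dotvC v u) => uLv.
rewrite -(ger0_norm L0) -sqrtr_sqr -sqrtrM ?sqr_ge0 // ler_sqrt; last first.
  by rewrite mulr_ge0 ?sqr_ge0 ?dotv_ge0.
nra.
Qed.

Lemma coord_le_norm u k : `|u ord0 k| <= `|u|.
Proof.
rewrite (_ : `|u| = mx_norm u) // mx_normrE; apply/bigmax_geP; right => /=.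
by exists (ord0, k).
Qed.

Lemma dotv_le_sqr_norm u : dotv u u <= d%:R * `|u| ^+ 2.
Proof.
apply: le_trans (_ : \sum_(k < d) `|u| ^+ 2 <= _); last first.
  by rewrite sumr_const card_ord mulr_natl.
apply: ler_sum => k _; rewrite -expr2 -real_normK ?num_real //.
by rewrite lerXn2r ?nnegrE // coord_le_norm.
Qed.

Lemma normr_dotv_le u v : `|dotv u v| <= (\sum_k `|u ord0 k|) * `|v|.
Proof.
rewrite mulr_suml; apply: le_trans (ler_norm_sum _ _ _) _.
by apply: ler_sum => k _; rewrite normrM ler_wpM2l ?coord_le_norm.
Qed.

End Dotv.

Section Vanishing.
Context {R : realType}.

Lemma le0_of_le_vanishing (z K : R) :
  (forall t, 0 < t <= 1 -> z <= K * t) -> z <= 0.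
Proof.
move=> zK; rewrite leNgt; apply/negP => z0.
have zK0 : 0 < z + `|K| by rewrite ltr_pwDl.
have t01 : 0 < z / (z + `|K|) <= 1.
  by rewrite divr_gt0 //= ler_pdivrMr // mul1r lerDl.
have := zK _ t01; rewrite leNgt => /negP; apply.
apply: (le_lt_trans (ler_wpM2r _ (ler_norm K))); first by rewrite divr_ge0 ?ltW.
rewrite mulrA ltr_pdivrMr //; nra.
Qed.

Lemma eq0_of_norm_le_vanishing (z K : R) :
  (forall t, 0 < t <= 1 -> `|z| <= K * t) -> z = 0.
Proof.
move=> zK; apply/le_anti/andP; split; last rewrite -oppr_le0.
all: apply: (le0_of_le_vanishing (K := K)) => t /zK.
all: by rewrite ler_norml => /andP[? ?]; lra.
Qed.

End Vanishing.

Lemma is_proj_dotv_le0 {R : realType} {d : nat} (C : set 'rV[R]_d) z p q :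
  convex_setE C -> is_proj C z p -> C q -> dotv (z - p) (q - p) <= 0.
Proof.
move=> convC [Cp pmin] Cq; rewrite -(@pmulr_rle0 _ 2) //.
apply: (le0_of_le_vanishing (K := dotv (q - p) (q - p))) => t /andP[t0 t1].
have t01 : 0 <= t <= 1 by rewrite ltW.
have := pmin _ (convC _ _ t Cq Cp t01).
have -> : z - (t *: q + (1 - t) *: p) = (z - p) - t *: (q - p).
  by apply/rowP => k; rewrite !mxE; ring.
move: (z - p) (q - p) => u v; rewrite ler_sqrt ?dotv_ge0 // => uv.
rewrite -(ler_pM2l t0); move: uv.
by rewrite !(dotvDl, dotvDr, dotvNl, dotvNr, dotvZl, dotvZr) (dotvC v u); lra.
Qed.

Section DotvLinear.
Context {R : realType} {d : nat} (u : 'rV[R]_d).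

Lemma dotv_is_linear : linear (dotv u : 'rV[R]_d -> R).
Proof. by move=> a v w; rewrite dotvDr dotvZr. Qed.

HB.instance Definition _ :=
  GRing.isLinear.Build R 'rV[R]_d R _ (dotv u) dotv_is_linear.

Lemma dotv_continuous : continuous (dotv u).
Proof.
apply/linear_bounded_continuous/linear_boundedP.
exists (\sum_k `|u ord0 k|); split; first exact: num_real.
move=> r ur v; apply: le_trans (normr_dotv_le u v) _.
by rewrite ler_wpM2r // ltW.
Qed.

End DotvLinear.

Lemma sqr_remainder_diff {R : realType} (V : normedModType R) (F : V -> R)
    (l : {linear V -> R}) x (M : R) :
  continuous l -> (forall h, `|F (x + h) - F x - l h| <= M * `|h| ^+ 2) ->
  differentiable F x /\ forall h, 'd F x h = l h.
Proof.
move=> lcont rem.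
have lo : F \o shift x = cst (F x) + l +o_ (0 : V) id.
  apply/eqaddoP => eps eps0; apply/nbhs_norm0P.
  exists (eps / (`|M| + 1)); first by rewrite /= divr_gt0 // ltr_pwDr.
  move=> h /= hlt.
  change (`|F (h + x) - (F x + l h)| <= eps * `|h|).
  rewrite [h + x]addrC opprD addrA.
  apply: le_trans (rem h) _; rewrite expr2 mulrA ler_wpM2r //.
  apply: le_trans (_ : `|M| * `|h| <= _); first by rewrite ler_wpM2r // ler_norm.
  apply: le_trans (_ : `|M| * (eps / (`|M| + 1)) <= _); first by rewrite ler_wpM2l // ltW.
  by rewrite mulrA ler_pdivrMr ?ltr_pwDr // mulrDr mulr1 mulrC lerDl ltW.
have dE := diff_unique lcont lo.
split; last by move=> h; rewrite dE.
by apply/diff_locallyP; rewrite dE.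
Qed.

(* [F - L/2 |.|^2] is concave. *)
Definition semiconcave_fun {R : realType} {d : nat} (L : R)
    (F : 'rV[R]_d -> R) : Prop :=
  forall a b t, 0 <= t <= 1 ->
    t * F a + (1 - t) * F b - L / 2 * (t * (1 - t)) * dotv (a - b) (a - b)
    <= F (t *: a + (1 - t) *: b).

Section DirectionalDerivative.
Context {R : realType} {d : nat} (F : 'rV[R]_d -> R).
Implicit Types (x h : 'rV[R]_d) (s t : R).

Definition diffq x h t := (F (x + t *: h) - F x) / t.

(* By convexity [diffq x h] is nondecreasing, so this infimum is the one-sided
   directional derivative at [x] in the direction [h]. *)
Definition ddir x h := inf [set diffq x h t | t in [set t | 0 < t]].

Definition grad x : 'rV[R]_d := \row_k ddir x 'e_k.

Variable L : R.
Hypotheses (L0 : 0 < L) (convF : convex_fun F) (sconcF : semiconcave_fun L F).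

Let ray_comb x h s t : 0 < t ->
  (s / t) *: (x + t *: h) + (1 - s / t) *: x = x + s *: h.
Proof. by move=> t0; apply/rowP => k; rewrite !mxE; field; rewrite gt_eqF. Qed.

Let ratio01 s t : 0 < s -> s <= t -> 0 <= s / t <= 1.
Proof.
move=> s0 st; have t0 := lt_le_trans s0 st.
by rewrite divr_ge0 ?(ltW s0) ?(ltW t0) //= ler_pdivrMr // mul1r.
Qed.

Lemma diffq_le x h s t : 0 < s -> s <= t -> diffq x h s <= diffq x h t.
Proof.
move=> s0 st; have t0 := lt_le_trans s0 st.
have l01 := ratio01 s0 st.
have := convF (x + t *: h) x l01; rewrite ray_comb // => cvx.
rewrite /diffq -subr_ge0.
have -> : (F (x + t *: h) - F x) / t - (F (x + s *: h) - F x) / s =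
    (s / t * F (x + t *: h) + (1 - s / t) * F x - F (x + s *: h)) / s.
  by field; rewrite !gt_eqF.
by rewrite divr_ge0 ?(ltW s0) // subr_ge0.
Qed.

Lemma diffq_ge x h s t : 0 < s -> s <= t ->
  diffq x h t - L / 2 * (t - s) * dotv h h <= diffq x h s.
Proof.
move=> s0 st; have t0 := lt_le_trans s0 st.
have l01 := ratio01 s0 st.
have := sconcF (x + t *: h) x l01; rewrite ray_comb // [x + _ - x]addrC addKr.
rewrite dotvZl dotvZr => sconc; rewrite /diffq -subr_ge0.
set N := dotv h h; set a := F (x + s *: h); set b := F (x + t *: h).
have -> : (a - F x) / s - ((b - F x) / t - L / 2 * (t - s) * N) =
    (a - (s / t * b + (1 - s / t) * F x - L / 2 * (s / t * (1 - s / t)) * (t * (t * N)))) / s.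
  by field; rewrite !gt_eqF.
by rewrite divr_ge0 ?(ltW s0) // subr_ge0.
Qed.

Lemma diffq_lbound x h s t : 0 < s -> 0 < t ->
  diffq x h t - L / 2 * t * dotv h h <= diffq x h s.
Proof.
move=> s0 t0; have N0 : 0 <= L / 2 * dotv h h.
  by rewrite mulr_ge0 ?dotv_ge0 // divr_ge0 // ltW.
have [st|ts] := leP s t.
  apply: le_trans (diffq_ge x h s0 st).
  have : 0 <= L / 2 * dotv h h * s by rewrite mulr_ge0 // ltW.
  lra.
apply: le_trans (diffq_le x h t0 (ltW ts)).
have : 0 <= L / 2 * dotv h h * t by rewrite mulr_ge0 // ltW.
lra.
Qed.

Lemma ddir_approx x h t : 0 < t ->
  ddir x h <= diffq x h t <= ddir x h + L / 2 * t * dotv h h.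
Proof.
move=> t0; have ne : [set diffq x h t | t in [set t | 0 < t]] !=set0.
  by exists (diffq x h 1), 1 => //=.
have lb : has_lbound [set diffq x h t | t in [set t | 0 < t]].
  by exists (diffq x h 1 - L / 2 * 1 * dotv h h) => _ [s s0 <-]; apply: diffq_lbound.
apply/andP; split; first by apply: ge_inf => //; exists t.
rewrite -lerBlDr; apply: lb_le_inf => // _ [s s0 <-].
exact: diffq_lbound.
Qed.

Lemma midpoint_gap a b c e : a + b = c + e ->
  F a + F b - F c - F e <= L / 4 * dotv (a - b) (a - b).
Proof.
move=> abce; have half : (1 - 2^-1 : R) = 2^-1 by field.
have half01 : 0 <= (2^-1 : R) <= 1 by rewrite invr_ge0 ler0n invf_le1 ?ler1n.
have := sconcF a b half01; have := convF c e half01.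
have mid : 2^-1 *: a + 2^-1 *: b = 2^-1 *: c + 2^-1 *: e.
  by rewrite -!scalerDr abce.
by rewrite !half mid; lra.
Qed.

Lemma diffq_add_gap x h1 h2 t : 0 < t ->
  `|diffq x (h1 + h2) t - diffq x h1 t - diffq x h2 t|
    <= L / 4 * (dotv (h1 + h2) (h1 + h2) + dotv (h1 - h2) (h1 - h2)) * t.
Proof.
move=> t0; set a := x + t *: h1; set b := x + t *: h2; set c := x + t *: (h1 + h2).
have ab_cx : a + b = c + x by apply/rowP => k; rewrite !mxE; ring.
have cx : c - x = t *: (h1 + h2) by apply/rowP => k; rewrite !mxE; ring.
have ab : a - b = t *: (h1 - h2) by apply/rowP => k; rewrite !mxE; ring.
have gap1 := midpoint_gap (esym ab_cx); have gap2 := midpoint_gap ab_cx.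
rewrite cx ab !(dotvZl, dotvZr) in gap1 gap2.
have -> : diffq x (h1 + h2) t - diffq x h1 t - diffq x h2 t = (F c + F x - F a - F b) / t.
  by rewrite /diffq; field; rewrite gt_eqF.
rewrite ler_norml !ler_pdivrMr // !ler_pdivlMr //.
have : 0 <= L / 4 * (t * (t * dotv (h1 + h2) (h1 + h2))).
  by rewrite !mulr_ge0 ?dotv_ge0 ?divr_ge0 ?ltW.
have : 0 <= L / 4 * (t * (t * dotv (h1 - h2) (h1 - h2))).
  by rewrite !mulr_ge0 ?dotv_ge0 ?divr_ge0 ?ltW.
by move=> ? ?; apply/andP; split; lra.
Qed.

Lemma ddir_add x h1 h2 : ddir x (h1 + h2) = ddir x h1 + ddir x h2.
Proof.
apply/eqP; rewrite -subr_eq0; apply/eqP.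
apply: (eq0_of_norm_le_vanishing (K := L / 4 * (dotv (h1 + h2) (h1 + h2)
    + dotv (h1 - h2) (h1 - h2))
  + L / 2 * (dotv h1 h1 + dotv h2 h2 + dotv (h1 + h2) (h1 + h2)))).
move=> t /andP[t0 _].
have := diffq_add_gap x h1 h2 t0; rewrite !ler_norml => /andP[? ?].
have /andP[? ?] := ddir_approx x (h1 + h2) t0.
have /andP[? ?] := ddir_approx x h1 t0; have /andP[? ?] := ddir_approx x h2 t0.
have N0 (u : 'rV[R]_d) : 0 <= L / 2 * t * dotv u u.
  by rewrite !mulr_ge0 ?dotv_ge0 ?divr_ge0 ?ltW.
have := N0 h1; have := N0 h2; have := N0 (h1 + h2).
by move=> *; apply/andP; split; lra.
Qed.

Lemma ddir0 x : ddir x 0 = 0.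
Proof. by have := ddir_add x 0 0; rewrite addr0; lra. Qed.

Lemma ddirN x h : ddir x (- h) = - ddir x h.
Proof. by have := ddir_add x h (- h); rewrite subrr ddir0; lra. Qed.

Lemma ddirZ_gt0 x h c : 0 < c -> ddir x (c *: h) = c * ddir x h.
Proof.
move=> c0; apply/eqP; rewrite -subr_eq0; apply/eqP.
apply: (eq0_of_norm_le_vanishing (K := L / 2 * (c * c) * dotv h h)).
move=> t /andP[t0 _]; have ct0 : 0 < c * t by rewrite mulr_gt0.
have diffqZ : diffq x (c *: h) t = c * diffq x h (c * t).
  by rewrite /diffq scalerA [t * c]mulrC; field; rewrite !gt_eqF.
have /andP[] := ddir_approx x (c *: h) t0; rewrite diffqZ dotvZl dotvZr => ? ?.
have /andP[lo hi] := ddir_approx x h ct0.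
have := ler_wpM2l (ltW c0) lo; have := ler_wpM2l (ltW c0) hi.
by rewrite ler_norml => ? ?; apply/andP; split; lra.
Qed.

Lemma ddirZ x h c : ddir x (c *: h) = c * ddir x h.
Proof.
have [c0|c0|->] := ltrgtP c 0; last by rewrite scale0r ddir0 mul0r.
  by rewrite -[c]opprK scaleNr ddirN ddirZ_gt0 ?oppr_gt0 //; ring.
exact: ddirZ_gt0.
Qed.

Lemma dotv_grad x h : dotv (grad x) h = ddir x h.
Proof.
rewrite [in RHS](row_sum_delta h) (big_morph (ddir x) (ddir_add x) (ddir0 x)).
by apply: eq_bigr => k _; rewrite ddirZ mxE mulrC.
Qed.

Lemma grad_sandwich x h :
  0 <= F (x + h) - F x - dotv (grad x) h <= L / 2 * dotv h h.
Proof.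
have /andP[] := ddir_approx x h ltr01.
by rewrite dotv_grad /diffq scale1r divr1 => ? ?; apply/andP; split; lra.
Qed.

End DirectionalDerivative.

Lemma subgradient_eq_of_quadratic_majorant {R : realType} {d : nat}
    (F : 'rV[R]_d -> R) x u v (L : R) : 0 < L ->
  (forall h, 0 <= F (x + h) - F x - dotv u h) ->
  (forall h, F (x + h) <= F x + dotv v h + L / 2 * dotv h h) -> u = v.
Proof.
move=> L0 sub maj; apply/eqP; rewrite -subr_eq0 -dotv_eq0 eq_le dotv_ge0 andbT.
set w := u - v; have uvw : dotv w w = dotv u w - dotv v w by rewrite {1}/w dotvBl.
have := sub (L^-1 *: w); have := maj (L^-1 *: w); rewrite !(dotvZl, dotvZr).
have -> : L / 2 * (L^-1 * (L^-1 * dotv w w)) = L^-1 * dotv w w / 2.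
  by field; rewrite gt_eqF.
have := congr1 (GRing.mul L^-1) uvw; rewrite mulrBr.
move=> *; rewrite -(@pmulr_rle0 _ L^-1) ?invr_gt0 //; lra.
Qed.

Section Sandwich.
Context {R : realType} {d : nat} (F : 'rV[R]_d -> R) (G : 'rV[R]_d -> 'rV[R]_d).
Variable L : R.
Hypotheses (L0 : 0 < L)
  (sandwichFG : forall x h, 0 <= F (x + h) - F x - dotv (G x) h <= L / 2 * dotv h h).

Lemma sandwich_gap_ge x y :
  (2 * L)^-1 * dotv (G y - G x) (G y - G x) <= F y - F x - dotv (G x) (y - x).
Proof.
set v := G y - G x; have vv : dotv v v = dotv (G y) v - dotv (G x) v.
  by rewrite {1}/v dotvBl.
clearbody v.
(* Both bounds are evaluated at the point [y - v / L]. *)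
have /andP[lo _] := sandwichFG x (y - L^-1 *: v - x).
have /andP[_ up] := sandwichFG y (- (L^-1 *: v)).
rewrite [x + _]addrC subrK in lo; rewrite dotvNl !dotvNr !opprK in up.
move: lo up; rewrite !(dotvDr, dotvNr, dotvZr, dotvNl, dotvZl, opprK).
have -> : L / 2 * (L^-1 * (L^-1 * dotv v v)) = (2 * L)^-1 * dotv v v.
  by field; rewrite gt_eqF.
have : L^-1 * dotv v v = 2 * ((2 * L)^-1 * dotv v v) by field; rewrite gt_eqF.
have := congr1 (GRing.mul L^-1) vv; rewrite mulrBr.
by move=> *; lra.
Qed.

Lemma sandwich_cocoercive x y :
  dotv (G x - G y) (G x - G y) <= L * dotv (G x - G y) (x - y).
Proof.
have := sandwich_gap_ge x y; have := sandwich_gap_ge y x.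
have -> : G y - G x = - (G x - G y) by rewrite opprB.
rewrite dotvNl dotvNr opprK -ler_pdivrMl //.
have -> : L^-1 * dotv (G x - G y) (G x - G y) =
    2 * ((2 * L)^-1 * dotv (G x - G y) (G x - G y)) by field; rewrite gt_eqF.
by rewrite !(dotvBl, dotvBr) => *; lra.
Qed.

Lemma sandwich_lipschitz x y : enorm (G x - G y) <= L * enorm (x - y).
Proof. exact/enorm_le_cocoercive/sandwich_cocoercive/ltW. Qed.

Lemma sandwich_has_gradient x : has_gradient F x (G x).
Proof.
have rem h : `|F (x + h) - F x - dotv (G x) h| <= L / 2 * d%:R * `|h| ^+ 2.
  have /andP[lo up] := sandwichFG x h; rewrite ger0_norm // -mulrA.
  by apply: le_trans up _; rewrite ler_wpM2l ?dotv_le_sqr_norm // divr_ge0 ?ltW.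
have [dF dFE] := sqr_remainder_diff (@dotv_continuous _ _ (G x)) rem.
by split => // h; rewrite dFE.
Qed.

End Sandwich.

Theorem convex_semiconcave_C11 {R : realType} {d : nat} (F : 'rV[R]_d -> R) (L : R) :
  0 < L -> convex_fun F -> semiconcave_fun L F -> C11 L F.
Proof.
move=> L0 convF sconcF; have sandwich := grad_sandwich L0 convF sconcF.
exists (grad F); split => [x | x y].
  exact: sandwich_has_gradient sandwich x.
exact: sandwich_lipschitz sandwich x y.
Qed.

Section Simplex.
Context {R : realType} {I : finType}.

Definition simplex_vertex (i0 : I) : I -> R := fun i => (i == i0)%:R.

Lemma simplex_vertexP i0 : simplex (simplex_vertex i0).
Proof.
split=> [|i]; last by rewrite /simplex_vertex ler0n.
by rewrite (bigD1 i0) //= /simplex_vertex eqxx big1 ?addr0 // => i /negbTE ->.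
Qed.

Lemma simplex_comb t (a b : I -> R) : 0 <= t <= 1 -> simplex a -> simplex b ->
  simplex (fun i => t * a i + (1 - t) * b i).
Proof.
move=> /andP[t0 t1] [suma a0] [sumb b0]; split=> [|i].
  by rewrite big_split /= -!mulr_sumr suma sumb !mulr1 addrC subrK.
by rewrite addr_ge0 // mulr_ge0 // subr_ge0.
Qed.

End Simplex.

Section ValueFunction.
Context {R : realType} {d : nat} {I : finType}.
Variables (L : R) (x g : I -> 'rV[R]_d) (f : I -> R) (C : set 'rV[R]_d).
Hypotheses (L0 : 0 < L) (I0 : (0 < #|I|)%N) (convC : convex_setE C) (C0 : C 0).

Local Notation w := (w_T L x g f).
Local Notation W := (W_T L x g f C).

Let w_point (a : I -> R) := \sum_i a i *: (x i - L^-1 *: g i).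
Let w_level (a : I -> R) := \sum_i a i * (f i - (2 * L)^-1 * enorm (g i) ^+ 2).

Let w_TE y nu a :
  w y nu a = L / 2 * dotv (y + nu - w_point a) (y + nu - w_point a) + w_level a.
Proof. by rewrite /w_T sqr_enorm. Qed.

Let w_T_values_has_inf y : has_inf [set w y nu a | nu in C & a in simplex].
Proof.
split.
  have [i0 _] := card_gt0P I0.
  by exists (w y 0 (simplex_vertex i0)), 0 => //; exists (simplex_vertex i0);
    [exact: simplex_vertexP|].
set c := fun i => f i - (2 * L)^-1 * enorm (g i) ^+ 2.
exists (- \sum_i `|c i|) => _ [nu _ [a [suma a0] <-]].
rewrite w_TE; apply: le_trans (_ : w_level a <= _); last first.
  by rewrite lerDr mulr_ge0 ?dotv_ge0 // divr_ge0 ?ler0n // ltW.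
rewrite -[X in X <= _]mul1r -suma mulr_suml; apply: ler_sum => i _.
rewrite ler_wpM2l // lerNl; apply: le_trans (ler_norm (- c i)) _; rewrite normrN.
by rewrite (bigD1 i) //= lerDl sumr_ge0.
Qed.

Lemma W_T_le y nu a : C nu -> simplex a -> W y <= w y nu a.
Proof.
move=> Cnu sa; apply: ge_inf; first by case: (w_T_values_has_inf y).
by exists nu => //; exists a.
Qed.

Lemma W_T_ge y m :
  (forall nu a, C nu -> simplex a -> m <= w y nu a) -> m <= W y.
Proof.
move=> wm; apply: lb_le_inf; first by case: (w_T_values_has_inf y).
by move=> _ [nu Cnu [a sa <-]]; apply: wm.
Qed.

Lemma w_T_comb y1 y2 nu1 nu2 a1 a2 t : 0 <= t <= 1 ->
  w (t *: y1 + (1 - t) *: y2) (t *: nu1 + (1 - t) *: nu2)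
    (fun i => t * a1 i + (1 - t) * a2 i)
  <= t * w y1 nu1 a1 + (1 - t) * w y2 nu2 a2.
Proof.
move=> /andP[t0 t1]; rewrite !w_TE.
have -> : w_point (fun i => t * a1 i + (1 - t) * a2 i) =
    t *: w_point a1 + (1 - t) *: w_point a2.
  rewrite /w_point !scaler_sumr -big_split; apply: eq_bigr => i _.
  by rewrite /= [in LHS]scalerDl !scalerA.
have -> : w_level (fun i => t * a1 i + (1 - t) * a2 i) =
    t * w_level a1 + (1 - t) * w_level a2.
  rewrite /w_level !mulr_sumr -big_split; apply: eq_bigr => i _.
  by rewrite /= [in LHS]mulrDl !mulrA.
have -> : t *: y1 + (1 - t) *: y2 + (t *: nu1 + (1 - t) *: nu2)
    - (t *: w_point a1 + (1 - t) *: w_point a2) =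
    t *: (y1 + nu1 - w_point a1) + (1 - t) *: (y2 + nu2 - w_point a2).
  by apply/rowP => k; rewrite !mxE; ring.
rewrite dotv_comb.
have : 0 <= L / 2 * (t * (1 - t)) * dotv (y1 + nu1 - w_point a1 - (y2 + nu2 - w_point a2))
  (y1 + nu1 - w_point a1 - (y2 + nu2 - w_point a2)).
  by rewrite !mulr_ge0 ?dotv_ge0 ?divr_ge0 ?subr_ge0 // ltW.
lra.
Qed.

Lemma W_T_convex : convex_fun W.
Proof.
move=> y1 y2 t t01; apply/ler_addgt0Pr => e e0.
have [_ [nu1 C1 [a1 s1 <-]] lt1] := inf_adherent e0 (w_T_values_has_inf y1).
have [_ [nu2 C2 [a2 s2 <-]] lt2] := inf_adherent e0 (w_T_values_has_inf y2).
apply: le_trans (W_T_le _ (convC C1 C2 t01) (simplex_comb t01 s1 s2)) _.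
apply: le_trans (w_T_comb _ _ _ _ _ _ t01) _.
have /andP[t0 t1] := t01; rewrite -subr_ge0 in t1.
have := ler_wpM2l t0 (ltW lt1); have := ler_wpM2l t1 (ltW lt2).
lra.
Qed.

Lemma W_T_semiconcave : semiconcave_fun L W.
Proof.
move=> a b t t01; apply: W_T_ge => nu al Cnu sal.
have /andP[t0 t1] := t01; rewrite -subr_ge0 in t1.
have := ler_wpM2l t0 (W_T_le a Cnu sal); have := ler_wpM2l t1 (W_T_le b Cnu sal).
rewrite !w_TE.
have -> : t *: a + (1 - t) *: b + nu - w_point al =
    t *: (a + nu - w_point al) + (1 - t) *: (b + nu - w_point al).
  by apply/rowP => k; rewrite !mxE; ring.
rewrite dotv_comb.
have -> : a + nu - w_point al - (b + nu - w_point al) = a - b.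
  by apply/rowP => k; rewrite !mxE; ring.
by move=> *; lra.
Qed.

Lemma W_T_vertex_le i h : W (x i + h) <= f i + dotv (g i) h + L / 2 * dotv h h.
Proof.
apply: le_trans (W_T_le _ C0 (simplex_vertexP i)) _; rewrite w_TE addr0.
have -> : w_point (simplex_vertex i) = x i - L^-1 *: g i.
  rewrite /w_point (bigD1 i) //= /simplex_vertex eqxx scale1r big1 ?addr0 //.
  by move=> j /negbTE ->; rewrite scale0r.
have -> : w_level (simplex_vertex i) = f i - (2 * L)^-1 * enorm (g i) ^+ 2.
  rewrite /w_level (bigD1 i) //= /simplex_vertex eqxx mul1r big1 ?addr0 //.
  by move=> j /negbTE ->; rewrite mul0r.
have -> : x i + h - (x i - L^-1 *: g i) = h + L^-1 *: g i.
  by apply/rowP => k; rewrite !mxE; ring.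
rewrite sqr_enorm !(dotvDl, dotvDr, dotvZl, dotvZr) (dotvC (g i) h).
by rewrite le_eqVlt; apply/predU1P; left; field; rewrite gt_eqF.
Qed.

Lemma W_T_vertex_ge i : is_proj C (- (L^-1 *: g i)) 0 ->
  (forall j, (2 * L)^-1 * enorm (g i - g j) ^+ 2 <= f j - f i - dotv (g i) (x j - x i)) ->
  f i <= W (x i).
Proof.
(* Young's inequality against [g i], then the interpolation conditions averaged
   with the weights [a]. *)
move=> proj_i interp_i; apply: W_T_ge => nu a Cnu [suma a0].
have gnu : 0 <= dotv (g i) nu.
  have := is_proj_dotv_le0 convC proj_i Cnu; rewrite !subr0 dotvNl dotvZl.
  by rewrite oppr_le0 pmulr_rge0 // invr_gt0.
have u_sum : x i + nu - w_point a = nu + \sum_j a j *: (x i - x j + L^-1 *: g j).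
  have -> : \sum_j a j *: (x i - x j + L^-1 *: g j) = \sum_j a j *: x i - w_point a.
    rewrite /w_point -sumrB; apply: eq_bigr => j _; rewrite -scalerBr.
    by congr (_ *: _); apply/rowP => k; rewrite !mxE; ring.
  by rewrite -scaler_suml suma scale1r addrA [nu + _]addrC.
have fi_le : f i <= \sum_j a j * (f j - dotv (g i) (x j - x i)
    - (2 * L)^-1 * enorm (g i - g j) ^+ 2).
  rewrite -[X in X <= _]mul1r -{1}suma mulr_suml; apply: ler_sum => j _.
  by apply: ler_wpM2l => //; have := interp_i j; lra.
have k_sum : (2 * L)^-1 * dotv (g i) (g i) =
    \sum_j a j * ((2 * L)^-1 * dotv (g i) (g i)).
  by rewrite -mulr_suml suma mul1r.
have sum_terms : \sum_j dotv (g i) (a j *: (x i - x j + L^-1 *: g j))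
    - (2 * L)^-1 * dotv (g i) (g i) + w_level a
    = \sum_j a j * (f j - dotv (g i) (x j - x i) - (2 * L)^-1 * enorm (g i - g j) ^+ 2).
  rewrite k_sum /w_level -sumrB -big_split /=; apply: eq_bigr => j _.
  rewrite !sqr_enorm !(dotvDl, dotvDr, dotvNl, dotvNr, dotvZl, dotvZr) (dotvC (g j) (g i)).
  by field; rewrite gt_eqF.
apply: (le_trans fi_le); rewrite w_TE u_sum.
apply: le_trans (_ : dotv (g i) (nu + \sum_j a j *: (x i - x j + L^-1 *: g j))
  - (2 * L)^-1 * dotv (g i) (g i) + w_level a <= _); last by rewrite lerD2r dotv_young.
by rewrite dotvDr dotv_sumr; lra.
Qed.

End ValueFunction.

Theorem theorem1 (R : realType) (d : nat) (I : finType) (L : R)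
  (x g : I -> 'rV[R]_d) (f : I -> R) (C : set 'rV[R]_d) :
  0 < L -> (0 < #|I|)%N ->
  closed C -> convex_setE C -> C 0 ->
  (convex_fun (W_T L x g f C) /\ C11 L (W_T L x g f C)) /\
  (forall i : I,
     is_proj C (- (L^-1 *: g i)) 0 ->
     (forall j : I, (2 * L)^-1 * enorm (g i - g j) ^+ 2
                    <= f j - f i - dotv (g i) (x j - x i)) ->
     W_T L x g f C (x i) = f i /\ has_gradient (W_T L x g f C) (x i) (g i)).
Proof.
(* Closedness of [C] only serves to attain the minimum; [W_T] is an infimum. *)
move=> L0 I0 _ convC C0.
have convW := W_T_convex x g f L0 I0 convC C0.
have sconcW := W_T_semiconcave x g f L0 I0 C0.
have sandwichW := grad_sandwich L0 convW sconcW.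
split; first by split => //; apply: convex_semiconcave_C11.
move=> i proj_i interp_i.
have upper := W_T_vertex_le x g f L0 I0 C0 i.
have Wxi : W_T L x g f C (x i) = f i.
  apply/le_anti/andP; split; last exact: W_T_vertex_ge.
  by have := upper 0; rewrite !dotv0r mulr0 !addr0.
split=> //; rewrite -Wxi in upper.
have lower h := proj1 (andP (sandwichW (x i) h)).
rewrite -(subgradient_eq_of_quadratic_majorant L0 lower upper).
exact: sandwich_has_gradient sandwichW (x i).
Qed.
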